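(* Let a group $G$ act 3-discontinuously on a compactum $T$, and let $A$ be a $G$-invariant set of self-linked entourages of $T$ consisting of finitely many $G$-orbits. Equip $\widetilde T=T\sqcup A$ with the subspace topology from $T\sqcup\mathrm{Ent}\,T$ (see context). Then the induced action of $G$ on $\widetilde T$ is 3-discontinuous, i.e. the induced action on the space $\Theta^3\widetilde T$ of 3-element subsets of $\widetilde T$ is properly discontinuous.
   Context: A compactum is a compact Hausdorff space with at least 3 points; an action is 3-discontinuous if the induced action on 3-element subsets is properly discontinuous. Let $S^2T$ be the space of unordered pairs of points of $T$ (diagonal pairs allowed), $\Delta^2T$ its diagonal. An entourage is a neighborhood of $\Delta^2T$ in $S^2T$; $\mathrm{Ent}\,T$ is the set of entourages. A set $U\subset T$ is $\mathbf e$-small if $\{x,y\}\in\mathbf e$ for all $x,y\in U$. Entourages $\mathbf a,\mathbf b$ are unlinked if $T=a\cup b$ for some $\mathbf a$-small $a$ and $\mathbf b$-small $b$, linked otherwise; $\mathbf a$ is self-linked if it is linked with itself. Topology on $T\sqcup\mathrm{Ent}\,T$: for $o\subset T$ let $\tilde o=o\cup\{\mathbf e\in\mathrm{Ent}\,T: T\setminus o\text{ is }\mathbf e\text{-small}\}$; a set $w\subset T\sqcup\mathrm{Ent}\,T$ is open iff for every $t\in w\cap T$ there is an open $o\subset T$ with $t\in o$ and $\tilde o\subset w$. (So each entourage is an isolated point and $T$ is a closed subspace.) $G$ acts on entourages through its action on $S^2T$. *)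

From Stdlib Require Import List.


Definition topology (X : Type) := (X -> Prop) -> Prop.

Definition is_topology {X : Type} (tX : topology X) : Prop :=
  tX (fun _ => True) /\
  (forall U V, tX U -> tX V -> tX (fun x => U x /\ V x)) /\
  (forall F : (X -> Prop) -> Prop, (forall U, F U -> tX U) ->
      tX (fun x => exists U, F U /\ U x)).

Definition compact {X : Type} (tX : topology X) (K : X -> Prop) : Prop :=
  forall F : (X -> Prop) -> Prop,
    (forall U, F U -> tX U) ->
    (forall x, K x -> exists U, F U /\ U x) ->
    exists l : list (X -> Prop),
      (forall U, In U l -> F U) /\ (forall x, K x -> exists U, In U l /\ U x).

Definition hausdorff {X : Type} (tX : topology X) : Prop :=
  forall x y, x <> y -> exists U V, tX U /\ tX V /\ U x /\ V y /\
     (forall z, U z -> V z -> False).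

Definition compactum {X : Type} (tX : topology X) : Prop :=
  is_topology tX /\ hausdorff tX /\ compact tX (fun _ => True) /\
  exists a b c : X, a <> b /\ a <> c /\ b <> c.

Definition subspace {Y : Type} (tY : topology Y) (P : Y -> Prop)
  : topology {y : Y | P y} :=
  fun U => exists V, tY V /\ forall z, U z <-> V (proj1_sig z).

Record group := Group {
  gcar :> Type;
  gmul : gcar -> gcar -> gcar;
  gone : gcar;
  ginv : gcar -> gcar;
  gmulA : forall x y z, gmul x (gmul y z) = gmul (gmul x y) z;
  gmul1 : forall x, gmul gone x = x;
  gmulV : forall x, gmul (ginv x) x = gone }.

(* an action of G on X by homeomorphisms (each act g is continuous,
   with continuous inverse act (ginv g)) *)
Record action (G : group) (X : Type) (tX : topology X) := Action {
  act :> G -> X -> X;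
  act1 : forall x, act (gone G) x = x;
  actM : forall g h x, act (gmul G g h) x = act g (act h x);
  act_cont : forall g U, tX U -> tX (fun x => U (act g x)) }.
Arguments action G {X} tX.
Arguments act {G X tX} _ _ _.

Definition is3set {X : Type} (S : X -> Prop) (a b c : X) : Prop :=
  a <> b /\ a <> c /\ b <> c /\ forall x, S x <-> (x = a \/ x = b \/ x = c).

Definition Theta3 (X : Type) :=
  {S : X -> Prop | exists a b c, is3set S a b c}.

(* quotient topology of (X^3 minus the big diagonal) by the symmetric group *)
Definition theta3_top {X : Type} (tX : topology X) : topology (Theta3 X) :=
  fun W => forall (S : Theta3 X) a b c, W S -> is3set (proj1_sig S) a b c ->
    exists Ua Ub Uc, tX Ua /\ tX Ub /\ tX Uc /\ Ua a /\ Ub b /\ Uc c /\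
      forall (S' : Theta3 X) x y z, Ua x -> Ub y -> Uc z ->
        is3set (proj1_sig S') x y z -> W S'.

(* The action of G on X is given as a relation R g x y ("g maps x to y");
   S' = g S in Theta3 X *)
Definition moves3 {G X : Type} (R : G -> X -> X -> Prop) (g : G)
  (S S' : Theta3 X) : Prop :=
  forall x, proj1_sig S' x <-> exists y, proj1_sig S y /\ R g y x.

Definition three_discontinuous {G X : Type} (tX : topology X)
  (R : G -> X -> X -> Prop) : Prop :=
  forall K : Theta3 X -> Prop, compact (theta3_top tX) K ->
    exists l : list G, forall g,
      (exists S S', K S /\ K S' /\ moves3 R g S S') -> In g l.

(* subsets of S^2 T are represented by symmetric relations on T *)
Definition symmetric {T : Type} (E : T -> T -> Prop) : Prop :=
  forall x y, E x y -> E y x.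

Definition prod_open {T : Type} (tT : topology T) (W : T -> T -> Prop) : Prop :=
  forall x y, W x y -> exists U V, tT U /\ tT V /\ U x /\ V y /\
    forall x' y', U x' -> V y' -> W x' y'.

(* E is a neighbourhood of the diagonal in S^2 T: it contains an open
   subset of S^2 T (a symmetric set open in T x T) containing the diagonal *)
Definition entourage {T : Type} (tT : topology T) (E : T -> T -> Prop) : Prop :=
  symmetric E /\
  exists W, symmetric W /\ prod_open tT W /\ (forall x, W x x) /\
    (forall x y, W x y -> E x y).

Definition Ent {T : Type} (tT : topology T) := {E : T -> T -> Prop | entourage tT E}.

Definition small {T : Type} (E : T -> T -> Prop) (U : T -> Prop) : Prop :=
  forall x y, U x -> U y -> E x y.

Definition unlinked {T : Type} (E F : T -> T -> Prop) : Prop :=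
  exists a b : T -> Prop, small E a /\ small F b /\ forall x, a x \/ b x.

Definition linked {T : Type} (E F : T -> T -> Prop) : Prop := ~ unlinked E F.

Definition self_linked {T : Type} (E : T -> T -> Prop) : Prop := linked E E.

(* image of a set of pairs under f (action of G on S^2 T) *)
Definition rel_img {T : Type} (f : T -> T) (E : T -> T -> Prop) : T -> T -> Prop :=
  fun x y => exists x' y', E x' y' /\ x = f x' /\ y = f y'.

Definition TEnt {T : Type} (tT : topology T) := (T + Ent tT)%type.

Definition tilde_top {T : Type} (tT : topology T) : topology (TEnt tT) :=
  fun w => forall t, w (inl t) ->
    exists o, tT o /\ o t /\ (forall x, o x -> w (inl x)) /\
      (forall e : Ent tT, small (proj1_sig e) (fun x => ~ o x) -> w (inr e)).

Definition inTA {T : Type} (tT : topology T) (A : Ent tT -> Prop) (z : TEnt tT) : Prop :=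
  match z with inl _ => True | inr e => A e end.

Definition Ttilde {T : Type} (tT : topology T) (A : Ent tT -> Prop) :=
  {z : TEnt tT | inTA tT A z}.

Definition Ttilde_top {T : Type} (tT : topology T) (A : Ent tT -> Prop)
  : topology (Ttilde tT A) := subspace (tilde_top tT) (inTA tT A).

Definition TEnt_rel {G : group} {T : Type} {tT : topology T} (a : action G tT)
  (g : G) (z z' : TEnt tT) : Prop :=
  match z, z' with
  | inl x, inl y => y = a g x
  | inr e, inr e' => forall x y, proj1_sig e' x y <-> rel_img (a g) (proj1_sig e) x y
  | _, _ => False
  end.

Definition Ttilde_rel {G : group} {T : Type} {tT : topology T} (a : action G tT)
  (A : Ent tT -> Prop) (g : G) (z z' : Ttilde tT A) : Prop :=
  TEnt_rel a g (proj1_sig z) (proj1_sig z').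

From Stdlib Require Import List Classical FunctionalExtensionality PropExtensionality ProofIrrelevance.
Import ListNotations.

(* Let K be a compact set of triples of T~ = T ⊔ A.  Fix an open entourage V, smaller than one
   separating three given points of T, such that the members of every triple in K are pairwise
   V-separated: no ball V(p) touches two of them, and no ball V(p) contains two of them (an
   entourage e touches V(p) if V(p) is not e-small, and lies within V(p) if the complement of
   V(p) is e-small).  Compactness of K reduces this to a neighbourhood of a single triple, where it
   follows from self-linkedness.  Now take D with D^4 ⊆ V.  The triples of pairwise D-far points of
   T form a compact set, so by 3-discontinuity of T only finitely many g map such a triple to such
   a triple, and every other g contracts: it maps the complement of some ball V(r) into some ball
   V(b).  Such a g cannot map a V-separated triple onto a V-separated triple, since two points of
   the first avoid V(r), so that their images lie within V(b). *)

Lemma list_filter_prop {A : Type} (Q : A -> Prop) (l : list A) :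
  exists l', forall x, In x l' <-> In x l /\ Q x.
Proof.
  induction l as [|x l [l' IH]].
  - exists nil; simpl; tauto.
  - destruct (classic (Q x)) as [Qx|nQx].
    + exists (x :: l'); intro y; simpl; rewrite IH.
      split; [intros [<-|?]|intros [[<-|?] ?]]; tauto.
    + exists l'; intro y; simpl; rewrite IH.
      split; [|intros [[<-|?] ?]]; tauto.
Qed.

Lemma finite_choice {A B : Type} (R : A -> B -> Prop) (l : list A) :
  (forall x, In x l -> exists y, R x y) ->
  exists m : list B, (forall x, In x l -> exists y, In y m /\ R x y) /\
                     (forall y, In y m -> exists x, In x l /\ R x y).
Proof.
  induction l as [|x l IH]; intro hl.
  - exists nil; split; intros _ [].
  - destruct (hl x (or_introl eq_refl)) as [y hy].
    destruct IH as [m [hm1 hm2]]; [intros; apply hl; right; assumption|].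
    exists (y :: m); split.
    + intros x' [<-|hx']; [exists y; simpl; auto|].
      destruct (hm1 x' hx') as [y' [? ?]]; exists y'; simpl; auto.
    + intros y' [<-|hy']; [exists x; simpl; auto|].
      destruct (hm2 y' hy') as [x' [? ?]]; exists x'; simpl; auto.
Qed.

Lemma pred_ext {X : Type} (P Q : X -> Prop) : (forall x, P x <-> Q x) -> P = Q.
Proof.
  intro h; apply functional_extensionality; intro x; apply propositional_extensionality, h.
Qed.

Lemma proj1_sig_inj {X : Type} {P : X -> Prop} (u v : sig P) : proj1_sig u = proj1_sig v -> u = v.
Proof. apply eq_sig_hprop; intros; apply proof_irrelevance. Qed.

Lemma proj1_sig_neq {X : Type} {P : X -> Prop} (u v : sig P) : u <> v -> proj1_sig u <> proj1_sig v.
Proof. intros nuv E; apply nuv, proj1_sig_inj, E. Qed.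

(** * Open sets and open entourages *)

Section OpenSets.
Context {X : Type} (tX : topology X) (htX : is_topology tX).

Lemma open_full : tX (fun _ => True).
Proof. apply htX. Qed.

Lemma openI U V : tX U -> tX V -> tX (fun x => U x /\ V x).
Proof. apply htX. Qed.

Lemma open_union (F : (X -> Prop) -> Prop) :
  (forall U, F U -> tX U) -> tX (fun x => exists U, F U /\ U x).
Proof. apply htX. Qed.

Lemma open_ext U V : tX U -> (forall x, U x <-> V x) -> tX V.
Proof. intros hU hUV; rewrite <- (pred_ext U V hUV); exact hU. Qed.

Lemma open_bigI (l : list (X -> Prop)) :
  (forall U, In U l -> tX U) -> tX (fun x => forall U, In U l -> U x).
Proof.
  induction l as [|U l IH]; intro hl.
  - apply (open_ext _ _ open_full); split; [intros _ _ []|auto].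
  - apply (open_ext (fun x => U x /\ forall V, In V l -> V x)).
    + apply openI; [apply hl; left; reflexivity|].
      apply IH; intros; apply hl; right; assumption.
    + intro x; simpl; split; [intros [Ux hx] V [<-|hV]; [exact Ux|exact (hx V hV)]|].
      intro h; split; [apply h; left; reflexivity|intros V hV; apply h; right; exact hV].
Qed.

Lemma compact_complement O :
  compact tX (fun _ => True) -> tX O -> compact tX (fun x => ~ O x).
Proof.
  intros hc hO F hF hcov.
  destruct (hc (fun U => F U \/ U = O)) as [l [hl hlcov]].
  - intros U [?| ->]; auto.
  - intros x _; destruct (classic (O x)) as [Ox|nOx]; [exists O; auto|].
    destruct (hcov x nOx) as [U [? ?]]; exists U; auto.
  - destruct (list_filter_prop F l) as [l' hl'].
    exists l'; split; [intros U hU; apply hl', hU|].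
    intros x nOx; destruct (hlcov x I) as [U [hU Ux]].
    exists U; split; [|assumption]; apply hl'; split; [assumption|].
    destruct (hl U hU) as [?| ->]; tauto.
Qed.

End OpenSets.

Definition relI {T : Type} (V W : T -> T -> Prop) x y := V x y /\ W x y.
Definition rel_bigI {T : Type} (l : list (T -> T -> Prop)) x y := forall V, In V l -> V x y.
Definition open_entourage {T : Type} (tT : topology T) (V : T -> T -> Prop) :=
  symmetric V /\ prod_open tT V /\ forall x, V x x.

Definition chain2 {T : Type} (D : T -> T -> Prop) x z := exists y, D x y /\ D y z.
Definition chain3 {T : Type} (D : T -> T -> Prop) x z := exists y, D x y /\ chain2 D y z.
Definition chain4 {T : Type} (D : T -> T -> Prop) x z := exists y, D x y /\ chain3 D y z.

Lemma chain2_intro {T : Type} (D : T -> T -> Prop) a b c : D a b -> D b c -> chain2 D a c.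
Proof. intros; exists b; auto. Qed.

Lemma chain3_intro {T : Type} (D : T -> T -> Prop) a b c d :
  D a b -> D b c -> D c d -> chain3 D a d.
Proof. intros; exists b; split; [|exists c]; auto. Qed.

Lemma chain4_intro {T : Type} (D : T -> T -> Prop) a b c d e :
  D a b -> D b c -> D c d -> D d e -> chain4 D a e.
Proof. intros; exists b; split; [|apply (chain3_intro D b c d e)]; auto. Qed.

Section OpenEntourages.
Context {T : Type} (tT : topology T) (htT : is_topology tT).

Lemma open_entourage_full : open_entourage tT (fun _ _ => True).
Proof.
  split; [|split]; [intros ? ? _; exact I| |intros; exact I].
  intros x y _; exists (fun _ => True), (fun _ => True).
  repeat split; apply (open_full tT htT).
Qed.

Lemma open_entourageI V W :
  open_entourage tT V -> open_entourage tT W -> open_entourage tT (relI V W).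
Proof.
  intros [sV [oV rV]] [sW [oW rW]]; split; [|split].
  - intros x y [? ?]; split; auto.
  - intros x y [Vxy Wxy].
    destruct (oV x y Vxy) as [U1 [V1 [? [? [? [? hV]]]]]].
    destruct (oW x y Wxy) as [U2 [V2 [? [? [? [? hW]]]]]].
    exists (fun z => U1 z /\ U2 z), (fun z => V1 z /\ V2 z).
    repeat split; try apply (openI tT htT); auto;
      [apply hV|apply hW]; tauto.
  - intro x; split; auto.
Qed.

Lemma open_entourage_bigI l :
  (forall V, In V l -> open_entourage tT V) -> open_entourage tT (rel_bigI l).
Proof.
  assert (ext : forall V W, open_entourage tT V -> (forall x y, V x y <-> W x y) ->
            open_entourage tT W).
  { intros V W hV hVW.
    replace W with V; [exact hV|].
    apply functional_extensionality; intro x; apply pred_ext, hVW. }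
  induction l as [|V l IH]; intro hl.
  - apply (ext _ _ open_entourage_full); split; [intros _ ? []|auto].
  - apply (ext (relI V (rel_bigI l))).
    + apply open_entourageI; [apply hl; left; reflexivity|].
      apply IH; intros; apply hl; right; assumption.
    + intros x y; split.
      * intros [Vxy hl'] W [<-|hW]; [exact Vxy|exact (hl' W hW)].
      * intro h; split; [apply h; left; reflexivity|intros W hW; apply h; right; exact hW].
Qed.

Lemma open_entourage_cover O Q : tT O -> tT Q -> (forall p, ~ O p -> Q p) ->
  open_entourage tT (fun a b => (O a /\ O b) \/ (Q a /\ Q b)).
Proof.
  intros hO hQ hOQ; split; [|split].
  - intros x y; tauto.
  - intros x y [[Ox Oy]|[Qx Qy]]; [exists O, O|exists Q, Q]; repeat split; tauto.
  - intro x; destruct (classic (O x)); [left|right]; auto.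
Qed.

Hypothesis hT : compactum tT.

Lemma compactum_regular O x : tT O -> O x ->
  exists R Q, tT R /\ tT Q /\ R x /\ (forall p, R p -> Q p -> False) /\
    (forall p, ~ O p -> Q p).
Proof.
  intros hO Ox; destruct hT as [_ [hH [hc _]]].
  set (sep_from_x := fun V => tT V /\ exists U, tT U /\ U x /\ forall p, U p -> V p -> False).
  destruct (compact_complement tT O hc hO sep_from_x) as [l [hlF hlcov]].
  - intros V [? _]; assumption.
  - intros p nOp.
    assert (x <> p) by (intros <-; contradiction).
    destruct (hH x p) as [U [V [? [? [? [? hUV]]]]]]; [assumption|].
    exists V; split; [split; [assumption|exists U; auto]|assumption].
  - destruct (finite_choice (fun V U => tT U /\ U x /\ forall p, U p -> V p -> False) l)
      as [m [hlm hml]]; [intros V hV; apply hlF, hV|].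
    exists (fun p => forall U, In U m -> U p), (fun p => exists V, In V l /\ V p).
    repeat split.
    + apply (open_bigI tT htT); intros U hU.
      destruct (hml U hU) as [V [_ [? _]]]; assumption.
    + apply (open_union tT htT (fun V => In V l)); intros V hV; apply hlF, hV.
    + intros U hU; destruct (hml U hU) as [V [_ [_ [? _]]]]; assumption.
    + intros p Rp [V [hV Vp]].
      destruct (hlm V hV) as [U [hU [_ [_ hUV]]]]; exact (hUV p (Rp U hU) Vp).
    + intros p nOp; destruct (hlcov p nOp) as [V [? ?]]; exists V; auto.
Qed.

Lemma open_entourage_separating x y : x <> y ->
  exists W, open_entourage tT W /\ ~ W x y.
Proof.
  intro nxy; destruct hT as [_ [hH _]].
  destruct (hH x y nxy) as [Ux [Uy [hUx [hUy [Uxx [Uyy hd]]]]]].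
  destruct (compactum_regular Ux x) as [R [Q [_ [hQ [Rx [hR hQc]]]]]]; [assumption..|].
  exists (fun a b => (Ux a /\ Ux b) \/ (Q a /\ Q b)); split.
  - apply open_entourage_cover; assumption.
  - intros [[_ ?]|[? _]]; [eapply hd|eapply hR]; eauto.
Qed.

Lemma open_entourage_separating3 p1 p2 p3 : p1 <> p2 -> p1 <> p3 -> p2 <> p3 ->
  exists W, open_entourage tT W /\ ~ W p1 p2 /\ ~ W p1 p3 /\ ~ W p2 p3.
Proof.
  intros n12 n13 n23.
  destruct (open_entourage_separating p1 p2 n12) as [W12 [? ?]].
  destruct (open_entourage_separating p1 p3 n13) as [W13 [? ?]].
  destruct (open_entourage_separating p2 p3 n23) as [W23 [? ?]].
  exists (relI W12 (relI W13 W23)); unfold relI; split; [|tauto].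
  repeat apply open_entourageI; assumption.
Qed.

Lemma open_entourage_half W : open_entourage tT W ->
  exists V, open_entourage tT V /\ forall x y z, V x y -> V y z -> W x z.
Proof.
  intros [_ [hWo hWr]]; pose proof hT as [_ [_ [hc _]]].
  (* Each point has a neighbourhood [R] and an open [O] with [O × O ⊆ W] whose complement
     stays in an open [Q] disjoint from [R]; intersect the finitely many [O²∪Q²]. *)
  set (square_in_W := fun (R : T -> Prop) (OQ : (T -> Prop) * (T -> Prop)) =>
    tT (fst OQ) /\ tT (snd OQ) /\ (forall a b, fst OQ a -> fst OQ b -> W a b) /\
    (forall p, R p -> snd OQ p -> False) /\ (forall p, ~ fst OQ p -> snd OQ p)).
  destruct (hc (fun R => tT R /\ exists OQ, square_in_W R OQ)) as [l [hlF hlcov]].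
  - intros R [? _]; assumption.
  - intros x _.
    destruct (hWo x x (hWr x)) as [U0 [U1 [hU0 [hU1 [U0x [U1x hU]]]]]].
    destruct (compactum_regular (fun z => U0 z /\ U1 z) x) as [R [Q [? [? [? [? ?]]]]]];
      [apply (openI tT htT); assumption|split; assumption|].
    exists R; repeat split; [assumption| |assumption].
    exists ((fun z => U0 z /\ U1 z), Q); repeat split; simpl; try assumption;
      [apply (openI tT htT); assumption|intros a b [? _] [_ ?]; apply hU; assumption].
  - destruct (finite_choice square_in_W l) as [m [hlm hml]]; [intros R hR; apply hlF, hR|].
    set (cover_rel := fun (OQ : (T -> Prop) * (T -> Prop)) a b =>
      (fst OQ a /\ fst OQ b) \/ (snd OQ a /\ snd OQ b)).
    exists (rel_bigI (map cover_rel m)); split.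
    + apply open_entourage_bigI; intros V hV.
      apply in_map_iff in hV as [OQ [<- hOQ]].
      destruct (hml OQ hOQ) as [R [_ [? [? [_ [_ ?]]]]]].
      apply open_entourage_cover; assumption.
    + intros x y z Vxy Vyz.
      destruct (hlcov y I) as [R [hR Ry]].
      destruct (hlm R hR) as [OQ [hOQ [_ [_ [hOW [hRQ _]]]]]].
      assert (hin : In (cover_rel OQ) (map cover_rel m)) by (apply in_map; assumption).
      destruct (Vxy _ hin) as [[Ox _]|[_ Qy]]; [|destruct (hRQ y Ry Qy)].
      destruct (Vyz _ hin) as [[_ Oz]|[Qy _]]; [|destruct (hRQ y Ry Qy)].
      apply hOW; assumption.
Qed.

Lemma open_entourage_quarter W : open_entourage tT W ->
  exists D, open_entourage tT D /\ forall x z, chain4 D x z -> W x z.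
Proof.
  intro hW.
  destruct (open_entourage_half W hW) as [V [hV hVW]].
  destruct (open_entourage_half V hV) as [D [hD hDV]].
  exists D; split; [assumption|].
  intros x z [y1 [? [y2 [? [y3 [? ?]]]]]]; apply (hVW x y2 z); eauto.
Qed.
End OpenEntourages.

(** * Compact and open sets of triples *)

Definition cover_compact {X : Type} (P : (X -> Prop) -> Prop) : Prop :=
  forall F, (forall U, F U -> P U) -> (forall x, exists U, F U /\ U x) ->
  exists l, (forall U, In U l -> F U) /\ (forall x, exists U, In U l /\ U x).

Definition boxes {X Y : Type} (PX : (X -> Prop) -> Prop) (PY : (Y -> Prop) -> Prop)
  (W : X * Y -> Prop) : Prop :=
  exists U V, PX U /\ PY V /\ forall p, W p <-> (U (fst p) /\ V (snd p)).

Lemma cover_compact_of_compact {X : Type} (tX : topology X) :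
  compact tX (fun _ => True) -> cover_compact tX.
Proof.
  intros hc F hF hcov; destruct (hc F hF) as [l [? hl]]; [intros x _; apply hcov|].
  exists l; split; [assumption|intro x; apply hl; exact I].
Qed.

Section Tube.
Context {X Y : Type} (tX : topology X) (htX : is_topology tX) (PY : (Y -> Prop) -> Prop)
  (cY : cover_compact PY) (F : (X * Y -> Prop) -> Prop)
  (hF : forall W, F W -> boxes tX PY W) (hcov : forall p, exists W, F W /\ W p).

Definition finitely_covered_tube (Ux : X -> Prop) : Prop :=
  exists lW, (forall W, In W lW -> F W) /\ forall x' y, Ux x' -> exists W, In W lW /\ W (x', y).

Lemma tube_around_fibre x : exists Ux, tX Ux /\ Ux x /\ finitely_covered_tube Ux.
Proof.
  set (box_at := fun V (UW : (X -> Prop) * (X * Y -> Prop)) =>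
    F (snd UW) /\ tX (fst UW) /\ PY V /\ fst UW x /\
    forall p, snd UW p <-> (fst UW (fst p) /\ V (snd p))).
  destruct (cY (fun V => exists UW, box_at V UW)) as [lV [hlV hlVcov]].
  - intros V [UW [_ [_ [? _]]]]; assumption.
  - intro y; destruct (hcov (x, y)) as [W [hW Wxy]].
    destruct (hF W hW) as [U [V [hU [hV hUV]]]].
    destruct (proj1 (hUV (x, y)) Wxy) as [Ux Vy].
    exists V; split; [exists (U, W); repeat split; auto; apply hUV|]; assumption.
  - destruct (finite_choice box_at lV) as [m [hlm hml]]; [intros V hV; apply hlV, hV|].
    exists (fun x' => forall U, In U (map fst m) -> U x'); split; [|split].
    + apply (open_bigI tX htX); intros U hU.
      apply in_map_iff in hU as [UW [<- hUW]].
      destruct (hml UW hUW) as [V [_ [_ [? _]]]]; assumption.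
    + intros U hU; apply in_map_iff in hU as [UW [<- hUW]].
      destruct (hml UW hUW) as [V [_ [_ [_ [_ [? _]]]]]]; assumption.
    + exists (map snd m); split.
      * intros W hW; apply in_map_iff in hW as [UW [<- hUW]].
        destruct (hml UW hUW) as [V [_ [? _]]]; assumption.
      * intros x' y Ux'; destruct (hlVcov y) as [V [hV Vy]].
        destruct (hlm V hV) as [UW [hUW [_ [_ [_ [_ hbox]]]]]].
        exists (snd UW); split; [apply in_map; assumption|].
        apply hbox; split; [apply Ux', in_map|]; assumption.
Qed.

Lemma finite_subcover_of_boxes (cX : cover_compact tX) :
  exists l, (forall W, In W l -> F W) /\ (forall p, exists W, In W l /\ W p).
Proof.
  destruct (cX (fun Ux => tX Ux /\ finitely_covered_tube Ux)) as [lU [hlU hlUcov]].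
  - intros U [? _]; assumption.
  - intro x; destruct (tube_around_fibre x) as [Ux [? [? ?]]].
    exists Ux; repeat split; assumption.
  - destruct (finite_choice (fun Ux lW => (forall W, In W lW -> F W) /\
      forall x' y, Ux x' -> exists W, In W lW /\ W (x', y)) lU) as [ll [hlU_ll hll_lU]].
    { intros Ux hUx; apply hlU, hUx. }
    exists (concat ll); split.
    + intros W hW; apply in_concat in hW as [lW [hlW hW]].
      destruct (hll_lU lW hlW) as [Ux [_ [hF' _]]]; apply hF', hW.
    + intros [x y]; destruct (hlUcov x) as [Ux [hUx Uxx]].
      destruct (hlU_ll Ux hUx) as [lW [hlW [_ hcovW]]].
      destruct (hcovW x y Uxx) as [W [hW Wxy]].
      exists W; split; [apply in_concat; exists lW; split|]; assumption.
Qed.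
End Tube.

Lemma tube_lemma {X Y : Type} (tX : topology X) (PY : (Y -> Prop) -> Prop) :
  is_topology tX -> cover_compact tX -> cover_compact PY -> cover_compact (boxes tX PY).
Proof. intros htX cX cY F hF hcov; exact (finite_subcover_of_boxes tX htX PY cY F hF hcov cX). Qed.

Definition tri {X : Type} (x y z : X) : X -> Prop := fun w => w = x \/ w = y \/ w = z.

Lemma is3set_tri {X : Type} (x y z : X) : x <> y -> x <> z -> y <> z -> is3set (tri x y z) x y z.
Proof. intros; repeat split; auto. Qed.

Definition triple {X : Type} (x y z : X) (hxy : x <> y) (hxz : x <> z) (hyz : y <> z)
  : Theta3 X := exist _ (tri x y z) (ex_intro _ x (ex_intro _ y (ex_intro _ z
    (is3set_tri x y z hxy hxz hyz)))).

Definition triple_nbhd {X : Type} (U1 U2 U3 : X -> Prop) (S : Theta3 X) : Prop :=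
  exists x y z, is3set (proj1_sig S) x y z /\ U1 x /\ U2 y /\ U3 z.

Section Theta3.
Context {X : Type}.

Lemma is3set_swap12 (S : X -> Prop) x y z : is3set S x y z -> is3set S y x z.
Proof. intros [? [? [? hS]]]; split; [|split; [|split]]; auto; intro w; rewrite hS; tauto. Qed.

Lemma is3set_swap23 (S : X -> Prop) x y z : is3set S x y z -> is3set S x z y.
Proof. intros [? [? [? hS]]]; split; [|split; [|split]]; auto; intro w; rewrite hS; tauto. Qed.

Lemma triple_nbhd_swap12 (U1 U2 U3 : X -> Prop) : triple_nbhd U1 U2 U3 = triple_nbhd U2 U1 U3.
Proof.
  apply pred_ext; intro S; split; intros [x [y [z [hS ?]]]];
    exists y, x, z; split; [apply is3set_swap12|tauto|apply is3set_swap12|tauto]; assumption.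
Qed.

Lemma triple_nbhd_swap23 (U1 U2 U3 : X -> Prop) : triple_nbhd U1 U2 U3 = triple_nbhd U1 U3 U2.
Proof.
  apply pred_ext; intro S; split; intros [x [y [z [hS ?]]]];
    exists x, z, y; split; [apply is3set_swap23|tauto|apply is3set_swap23|tauto]; assumption.
Qed.

Lemma is3set_cases (S : X -> Prop) x y z a b c : is3set S x y z -> is3set S a b c ->
  (a, b, c) = (x, y, z) \/ (a, b, c) = (x, z, y) \/ (a, b, c) = (y, x, z) \/
  (a, b, c) = (y, z, x) \/ (a, b, c) = (z, x, y) \/ (a, b, c) = (z, y, x).
Proof.
  intros [? [? [? hS]]] [? [? [? hS']]].
  assert (ha : a = x \/ a = y \/ a = z) by (apply hS, hS'; auto).
  assert (hb : b = x \/ b = y \/ b = z) by (apply hS, hS'; auto).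
  assert (hc : c = x \/ c = y \/ c = z) by (apply hS, hS'; auto).
  destruct ha as [-> | [-> | ->]]; destruct hb as [-> | [-> | ->]];
    destruct hc as [-> | [-> | ->]]; tauto.
Qed.

Variable tX : topology X.

Lemma triple_nbhd_open_at U1 U2 U3 x y z :
  tX U1 -> tX U2 -> tX U3 -> U1 x -> U2 y -> U3 z ->
  exists Ux Uy Uz, tX Ux /\ tX Uy /\ tX Uz /\ Ux x /\ Uy y /\ Uz z /\
    forall (S : Theta3 X) x' y' z', Ux x' -> Uy y' -> Uz z' -> is3set (proj1_sig S) x' y' z' ->
      triple_nbhd U1 U2 U3 S.
Proof.
  intros; exists U1, U2, U3; repeat split; auto.
  intros S x' y' z' ? ? ? ?; exists x', y', z'; auto.
Qed.

Lemma triple_nbhd_open U1 U2 U3 : tX U1 -> tX U2 -> tX U3 -> theta3_top tX (triple_nbhd U1 U2 U3).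
Proof.
  intros ? ? ? S a b c [x [y [z [hS [? [? ?]]]]]] habc.
  destruct (is3set_cases _ x y z a b c hS habc) as [E|[E|[E|[E|[E|E]]]]];
    injection E as -> -> ->;
    [| rewrite triple_nbhd_swap23 | rewrite triple_nbhd_swap12
     | rewrite triple_nbhd_swap12, triple_nbhd_swap23
     | rewrite triple_nbhd_swap23, triple_nbhd_swap12
     | rewrite triple_nbhd_swap12, triple_nbhd_swap23, triple_nbhd_swap12];
    apply triple_nbhd_open_at; assumption.
Qed.
End Theta3.

Definition far_triple {T : Type} (D : T -> T -> Prop) (x y z : T) : Prop :=
  ~ D x y /\ ~ D x z /\ ~ D y z.

Definition far_triples {T : Type} (D : T -> T -> Prop) (S : Theta3 T) : Prop :=
  exists x y z, is3set (proj1_sig S) x y z /\ far_triple D x y z.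

Definition cube {T : Type} (U1 U2 U3 : T -> Prop) (p : T * (T * T)) : Prop :=
  U1 (fst p) /\ U2 (fst (snd p)) /\ U3 (snd (snd p)).

Section FarTriples.
Context {T : Type} (tT : topology T) (htT : is_topology tT).

Lemma cube_boxes U1 U2 U3 : tT U1 -> tT U2 -> tT U3 ->
  boxes tT (boxes tT tT) (cube U1 U2 U3).
Proof.
  intros; exists U1, (fun q => U2 (fst q) /\ U3 (snd q)); split; [assumption|split].
  - exists U2, U3; repeat split; tauto.
  - intro p; unfold cube; tauto.
Qed.

Variable D : T -> T -> Prop.
Hypotheses (hDo : prod_open tT D) (hDr : forall x, D x x).

Lemma far_triple_neq x y z : far_triple D x y z -> x <> y /\ x <> z /\ y <> z.
Proof. intros [? [? ?]]; repeat split; intros <-; auto. Qed.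

Lemma near_pair_cube x y z : ~ far_triple D x y z ->
  exists U1 U2 U3, tT U1 /\ tT U2 /\ tT U3 /\ cube U1 U2 U3 (x, (y, z)) /\
    forall x' y' z', cube U1 U2 U3 (x', (y', z')) -> ~ far_triple D x' y' z'.
Proof.
  intro nfar; pose proof (open_full tT htT) as hfull.
  destruct (classic (D x y)) as [Dxy|nDxy]; [|destruct (classic (D x z)) as [Dxz|nDxz]].
  - destruct (hDo x y Dxy) as [U [V [? [? [? [? hUV]]]]]].
    exists U, V, (fun _ => True); repeat split; auto.
    intros x' y' z' [? [? _]] [? _]; auto.
  - destruct (hDo x z Dxz) as [U [V [? [? [? [? hUV]]]]]].
    exists U, (fun _ => True), V; repeat split; auto.
    intros x' y' z' [? [_ ?]] [_ [? _]]; auto.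
  - assert (Dyz : D y z) by (apply NNPP; intro; apply nfar; repeat split; assumption).
    destruct (hDo y z Dyz) as [U [V [? [? [? [? hUV]]]]]].
    exists (fun _ => True), U, V; repeat split; auto.
    intros x' y' z' [_ [? ?]] [_ [_ ?]]; auto.
Qed.

Lemma far_triples_compact : compact tT (fun _ => True) ->
  compact (theta3_top tT) (far_triples D).
Proof.
  intros hc F hF hcov.
  (* Cover T^3 by boxes each of which either lies in a member of F or holds no far triple. *)
  set (inside_F := fun (W : T * (T * T) -> Prop) N => F N /\
    forall S x y z, W (x, (y, z)) -> is3set (proj1_sig S) x y z -> N S).
  set (inside_F_some := fun W => exists N, inside_F W N).
  destruct (tube_lemma tT (boxes tT tT) htT (cover_compact_of_compact tT hc)
    (tube_lemma tT tT htT (cover_compact_of_compact tT hc) (cover_compact_of_compact tT hc))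
    (fun W => boxes tT (boxes tT tT) W /\ (inside_F_some W \/
       forall x y z, W (x, (y, z)) -> ~ far_triple D x y z))) as [lW [hlW hlWcov]].
  - intros W [? _]; assumption.
  - intros [x [y z]]; destruct (classic (far_triple D x y z)) as [far|nfar].
    + destruct (far_triple_neq x y z far) as [nxy [nxz nyz]].
      destruct (hcov (triple x y z nxy nxz nyz)) as [N [hN HN]];
        [exists x, y, z; split; [apply is3set_tri|]; assumption|].
      destruct (hF N hN _ x y z HN (is3set_tri x y z nxy nxz nyz))
        as [U1 [U2 [U3 [? [? [? [? [? [? hU]]]]]]]]].
      exists (cube U1 U2 U3); split; [split; [apply cube_boxes; assumption|]|repeat split; assumption].
      left; exists N; split; [assumption|].
      intros S x' y' z' [? [? ?]]; apply hU; assumption.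
    + destruct (near_pair_cube x y z nfar) as [U1 [U2 [U3 [? [? [? [? hU]]]]]]].
      exists (cube U1 U2 U3); split; [split; [apply cube_boxes; assumption|]|assumption].
      right; intros x' y' z'; apply hU.
  - destruct (list_filter_prop inside_F_some lW) as [lW' hlW'].
    destruct (finite_choice inside_F lW') as [lN [hlWN hlNW]]; [intros W hW; apply hlW', hW|].
    exists lN; split; [intros N hN; destruct (hlNW N hN) as [W [_ [? _]]]; assumption|].
    intros S [x [y [z [hS far]]]].
    destruct (hlWcov (x, (y, z))) as [W [hW Wxyz]].
    destruct (hlW W hW) as [_ [hinside|hnear]]; [|destruct (hnear x y z Wxyz far)].
    destruct (hlWN W (proj2 (hlW' W) (conj hW hinside))) as [N [hN [_ HN]]].
    exists N; split; [|apply (HN S x y z)]; assumption.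
Qed.
End FarTriples.

(** * Maps moving no far triple onto a far triple *)

Section Contraction.
Variables (T : Type) (D V : T -> T -> Prop) (f : T -> T).
Hypotheses (D_sym : symmetric D) (D_refl : forall x, D x x)
  (chain4_V : forall x y, chain4 D x y -> V x y).

#[local] Hint Resolve D_refl chain2_intro chain3_intro chain4_intro chain4_V : core.

(* [refute] closes [~ R u v] or [False] by a short [D]-chain contradicting a negated
   hypothesis; [symmetrize] first adds the symmetric copy of every [D]-hypothesis, so that
   [eauto] finds the chains without a (costly) symmetry hint. *)
Ltac symmetrize := repeat match goal with
  | H : D ?a ?b |- _ => lazymatch goal with
      | _ : D b a |- _ => fail
      | _ => pose proof (D_sym _ _ H)
      end
  end.
Ltac chain := symmetrize; eauto 3.
Ltac refute := (intro || exfalso); symmetrize; match goal with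
  | H : ~ D _ _ |- False => solve [apply H; eauto 1]
  | H : ~ chain2 D _ _ |- False => solve [apply H; eauto 2]
  | H : ~ chain3 D _ _ |- False => solve [apply H; eauto 2]
  | H : ~ V _ _ |- False => solve [apply H; eauto 3]
  | H : ~ _ |- False => solve [apply H; tauto]
  end.

Lemma far_from_pair p1 p2 p3 : ~ V p1 p2 -> ~ V p1 p3 -> ~ V p2 p3 ->
  forall z1 z2, exists t, ~ chain2 D z1 t /\ ~ chain2 D z2 t.
Proof.
  intros n12 n13 n23 z1 z2; apply NNPP; intro hn.
  assert (near : forall t, chain2 D z1 t \/ chain2 D z2 t).
  { intro t; apply NNPP; intro h; apply hn; exists t; tauto. }
  assert (same : forall u v z, chain2 D z u -> chain2 D z v -> V u v).
  { intros u v z [m1 [? ?]] [m2 [? ?]]; chain. }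
  destruct (near p1); destruct (near p2); destruct (near p3); eauto.
Qed.

Hypothesis no_far_image :
  forall x y z, far_triple D x y z -> far_triple D (f x) (f y) (f z) -> False.

Lemma far_pair_cover z1 z2 : ~ chain3 D z1 z2 -> ~ chain3 D (f z1) (f z2) ->
  forall z, D z1 z \/ D z2 z \/ D (f z1) (f z) \/ D (f z2) (f z).
Proof.
  intros n1 n2 z; apply NNPP; intro hn.
  apply (no_far_image z1 z2 z); repeat split; refute.
Qed.

Section FarPair.
Variables (z1 z2 t t' : T).
Hypotheses (n1 : ~ chain3 D z1 z2) (n2 : ~ chain3 D (f z1) (f z2))
  (Dz1t' : D z1 t') (ft'1 : ~ chain2 D (f z1) (f t')) (ft'2 : ~ chain2 D (f z2) (f t'))
  (t1 : ~ chain2 D z1 t) (t2 : ~ chain2 D z2 t).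

Lemma far_pair_image_near : D (f z2) (f t).
Proof.
  destruct (far_pair_cover z1 z2 n1 n2 t) as [h|[h|[h|h]]]; [refute|refute| |assumption].
  exfalso; apply (no_far_image t' z2 t); repeat split; refute.
Qed.

Lemma far_pair_contraction z : ~ V z1 z -> V (f z2) (f z).
Proof.
  intro hz; apply NNPP; intro hz'.
  pose proof far_pair_image_near as Dft.
  destruct (classic (D z2 z)); destruct (classic (D (f z1) (f z))).
  - apply (no_far_image z t' t); repeat split; refute.
  - apply (no_far_image z z1 t); repeat split; refute.
  - apply (no_far_image z z2 t'); repeat split; refute.
  - destruct (far_pair_cover z1 z2 n1 n2 z) as [?|[?|[?|?]]]; [refute..].
Qed.
End FarPair.

Hypothesis f_surj : forall y, exists x, f x = y.

Lemma contraction p1 p2 p3 : ~ V p1 p2 -> ~ V p1 p3 -> ~ V p2 p3 ->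
  exists r a, forall x, ~ V r x -> V a (f x).
Proof.
  intros n12 n13 n23.
  destruct (classic (exists z1 z2, ~ chain3 D z1 z2 /\ ~ chain3 D (f z1) (f z2)))
    as [[z1 [z2 [n1 n2]]]|no_far_pair].
  2: { exists p1, (f p1); intros x hx; apply NNPP; intro hfx.
       apply no_far_pair; exists p1, x; split; intros [y [? [y' [? ?]]]];
       refute. }
  destruct (far_from_pair p1 p2 p3 n12 n13 n23 z1 z2) as [t [t1 t2]].
  destruct (far_from_pair p1 p2 p3 n12 n13 n23 (f z1) (f z2)) as [u [u1 u2]].
  destruct (f_surj u) as [t' <-].
  destruct (far_pair_cover z1 z2 n1 n2 t') as [h|[h|[h|h]]]; [| |refute..].
  - exists z1, (f z2); apply (far_pair_contraction z1 z2 t t'); assumption.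
  - exists z2, (f z1); apply (far_pair_contraction z2 z1 t t'); try assumption;
      intros [y [? [y' [? ?]]]]; refute.
Qed.
End Contraction.

(** * Separated triples of [T ⊔ Ent T] *)

Section TEnt.
Context {T : Type} {tT : topology T}.

Definition touches (V : T -> T -> Prop) (p : T) (c : TEnt tT) : Prop :=
  match c with inl x => V p x | inr e => ~ small (proj1_sig e) (V p) end.

Definition within (V : T -> T -> Prop) (p : T) (c : TEnt tT) : Prop :=
  match c with inl x => V p x | inr e => small (proj1_sig e) (fun q => ~ V p q) end.

Definition separated (V : T -> T -> Prop) (c c' : TEnt tT) : Prop :=
  forall p, ~ (touches V p c /\ touches V p c') /\ ~ (within V p c /\ within V p c').

Definition nbhd (V : T -> T -> Prop) (c : TEnt tT) (w : TEnt tT) : Prop :=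
  match c, w with
  | inl x, inl t => V x t
  | inl x, inr e => small (proj1_sig e) (fun q => ~ V x q)
  | inr e, _ => w = inr e
  end.

Definition near_point (V : T -> T -> Prop) (c : TEnt tT) (p : T) : Prop :=
  match c with inl x => chain2 V x p | inr _ => False end.

Definition adapted (V : T -> T -> Prop) (c : TEnt tT) : Prop :=
  forall e, c = inr e -> forall x z, chain2 V x z -> proj1_sig e x z.

Definition apart (V : T -> T -> Prop) (c c' : TEnt tT) : Prop :=
  forall x y, c = inl x -> c' = inl y -> ~ chain4 V x y.

Lemma separated_sym V c c' : separated V c c' -> separated V c' c.
Proof. intros h p; destruct (h p); split; tauto. Qed.

Lemma separated_sub (V V' : T -> T -> Prop) c c' :
  (forall x y, V' x y -> V x y) -> separated V c c' -> separated V' c c'.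
Proof.
  intros hV' h p; destruct (h p) as [ht hw].
  assert (touches_sub : forall c0, touches V' p c0 -> touches V p c0).
  { intros [x|e]; simpl; auto; intros hn hs; apply hn; intros u v ? ?; apply hs; auto. }
  assert (within_sub : forall c0, within V' p c0 -> within V p c0).
  { intros [x|e]; simpl; auto; intros hs u v hu hv; apply hs; intro; auto. }
  split; intros [? ?]; [apply ht|apply hw]; split; auto.
Qed.

Lemma nbhd_self V c : (forall x, V x x) -> nbhd V c c.
Proof. intro; destruct c; simpl; auto. Qed.

Lemma nbhd_open (A : Ent tT -> Prop) V c :
  open_entourage tT V -> Ttilde_top tT A (fun w => nbhd V c (proj1_sig w)).
Proof.
  intros [_ [hVo _]]; exists (nbhd V c); split; [|intro; tauto].
  intros t ht; destruct c as [x|e]; [|discriminate].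
  destruct (hVo x t ht) as [U0 [U1 [_ [? [? [? hU]]]]]].
  exists U1; split; [|split; [|split]]; simpl; auto.
  intros f hf u v hu hv; apply hf; intro; [apply hu|apply hv]; auto.
Qed.

Lemma near_point_nbhd (A : Ent tT -> Prop) V c :
  (forall e, A e -> self_linked (proj1_sig e)) -> symmetric V -> adapted V c ->
  forall w : Ttilde tT A, nbhd V c (proj1_sig w) ->
  forall p, touches V p (proj1_sig w) \/ within V p (proj1_sig w) -> near_point V c p.
Proof.
  intros hA hVs hVc [w hw] hcw p htw; simpl in *.
  destruct c as [x|e]; simpl in *; [destruct w as [t|f]; simpl in *|].
  - exists t; split; [|apply hVs]; destruct htw; assumption.
  - apply NNPP; intro hn.
    assert (far : forall q, ~ V x q \/ ~ V p q).
    { intro q; apply NNPP; intro h; apply hn; exists q; split; [|apply hVs]; tauto. }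
    destruct htw as [ht|hw'].
    + apply ht; intros u v hu hv; apply hcw; [destruct (far u)|destruct (far v)]; tauto.
    + (* otherwise [f] would be small on both [~ V x] and [~ V p], which cover [T] *)
      apply (hA f hw); exists (fun q => ~ V x q), (fun q => ~ V p q); auto.
  - subst w; simpl in *.
    assert (small_ball : small (proj1_sig e) (V p)).
    { intros u v hu hv; apply (hVc e eq_refl); exists p; split; [apply hVs|]; assumption. }
    destruct htw as [ht|hw']; [exact (ht small_ball)|].
    apply (hA e hw); exists (V p), (fun q => ~ V p q); repeat split; auto.
    intro q; apply classic.
Qed.

Lemma near_point_apart V c c' p : symmetric V -> apart V c c' ->
  near_point V c p -> near_point V c' p -> False.
Proof.
  intros hVs hcc'; destruct c as [x|e]; destruct c' as [y|e']; simpl; try tauto.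
  intros [q [? ?]] [q' [? ?]]; apply (hcc' x y eq_refl eq_refl).
  apply (chain4_intro V x q p q' y); [| |apply hVs..]; assumption.
Qed.

Lemma separated_nbhd (A : Ent tT -> Prop) V c c' :
  (forall e, A e -> self_linked (proj1_sig e)) -> symmetric V ->
  forall u v : Ttilde tT A, nbhd V c (proj1_sig u) -> nbhd V c' (proj1_sig v) ->
  adapted V c -> adapted V c' -> apart V c c' -> separated V (proj1_sig u) (proj1_sig v).
Proof.
  intros hA hVs u v hu hv hc hc' hcc' p.
  assert (hu' := near_point_nbhd A V c hA hVs hc u hu p).
  assert (hv' := near_point_nbhd A V c' hA hVs hc' v hv p).
  split; intros [? ?]; apply (near_point_apart V c c' p hVs hcc'); auto.
Qed.
End TEnt.

Definition pairwise_separated {T : Type} {tT : topology T} (A : Ent tT -> Prop)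
  (V : T -> T -> Prop) (S : Theta3 (Ttilde tT A)) : Prop :=
  forall c c', proj1_sig S c -> proj1_sig S c' -> c <> c' -> separated V (proj1_sig c) (proj1_sig c').

Section Separation.
Context {T : Type} {tT : topology T} (hT : compactum tT).

Lemma adapted_eventually (c : TEnt tT) : exists W, open_entourage tT W /\
  forall V, (forall x, V x x) -> (forall x z, chain4 V x z -> W x z) -> adapted V c.
Proof.
  destruct hT as [htT _]; destruct c as [x|e].
  - exists (fun _ _ => True); split; [apply open_entourage_full, htT|discriminate].
  - destruct (proj2_sig e) as [_ [W [? [? [? hWe]]]]].
    exists W; split; [split; auto|].
    intros V hVr hVW e' [= <-] x z [y [? ?]]; apply hWe, hVW.
    apply (chain4_intro V x y z z z); auto.
Qed.

Lemma apart_eventually (c c' : TEnt tT) : c <> c' -> exists W, open_entourage tT W /\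
  forall V, (forall x z, chain4 V x z -> W x z) -> apart V c c'.
Proof.
  intro ncc'; pose proof hT as [htT _].
  destruct c as [x|e]; destruct c' as [y|e'];
    try (exists (fun _ _ => True); split; [apply open_entourage_full, htT|discriminate]).
  destruct (open_entourage_separating tT htT hT x y) as [W [? nW]]; [congruence|].
  exists W; split; [assumption|].
  intros V hVW x' y' [= <-] [= <-] h; apply nW, hVW, h.
Qed.

Lemma local_separation (c1 c2 c3 : TEnt tT) : c1 <> c2 -> c1 <> c3 -> c2 <> c3 ->
  exists V, open_entourage tT V /\ adapted V c1 /\ adapted V c2 /\ adapted V c3 /\
    apart V c1 c2 /\ apart V c1 c3 /\ apart V c2 c3.
Proof.
  intros n12 n13 n23; pose proof hT as [htT _].
  destruct (adapted_eventually c1) as [W1 [? h1]].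
  destruct (adapted_eventually c2) as [W2 [? h2]].
  destruct (adapted_eventually c3) as [W3 [? h3]].
  destruct (apart_eventually c1 c2 n12) as [W12 [? h12]].
  destruct (apart_eventually c1 c3 n13) as [W13 [? h13]].
  destruct (apart_eventually c2 c3 n23) as [W23 [? h23]].
  destruct (open_entourage_quarter tT htT hT (rel_bigI [W1; W2; W3; W12; W13; W23]))
    as [V [hV hVW]].
  { apply open_entourage_bigI; [assumption|].
    intros W hW; repeat (destruct hW as [<-|hW]; [assumption|]); destruct hW. }
  pose proof hV as [_ [_ hVr]].
  exists V; split; [exact hV|]; repeat split; [apply h1|apply h2|apply h3|apply h12|apply h13|apply h23];
    try assumption; intros x z hxz; apply (hVW x z hxz); simpl; tauto.
Qed.
Variable A : Ent tT -> Prop.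
Hypothesis hA : forall e, A e -> self_linked (proj1_sig e).

Lemma pairwise_separated_sub V V' S : (forall x y, V' x y -> V x y) ->
  pairwise_separated A V S -> pairwise_separated A V' S.
Proof. intros hV' h c c' ? ? ?; apply (separated_sub V); auto. Qed.

Lemma pairwise_separated_untouched V S p : pairwise_separated A V S ->
  exists c c', proj1_sig S c /\ proj1_sig S c' /\ c <> c' /\
    ~ touches V p (proj1_sig c) /\ ~ touches V p (proj1_sig c').
Proof.
  intro hS; destruct (proj2_sig S) as [c1 [c2 [c3 [n12 [n13 [n23 hS3]]]]]].
  assert (in1 : proj1_sig S c1) by (apply hS3; auto).
  assert (in2 : proj1_sig S c2) by (apply hS3; auto).
  assert (in3 : proj1_sig S c3) by (apply hS3; auto).
  destruct (hS c1 c2 in1 in2 n12 p) as [t12 _].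
  destruct (hS c1 c3 in1 in3 n13 p) as [t13 _].
  destruct (hS c2 c3 in2 in3 n23 p) as [t23 _].
  destruct (classic (touches V p (proj1_sig c1)));
    [exists c2, c3|destruct (classic (touches V p (proj1_sig c2)));
      [exists c1, c3|exists c1, c2]]; tauto.
Qed.

Lemma separating_nbhd (S : Theta3 (Ttilde tT A)) : exists N V,
  theta3_top (Ttilde_top tT A) N /\ N S /\ open_entourage tT V /\
  forall S', N S' -> pairwise_separated A V S'.
Proof.
  destruct (proj2_sig S) as [c1 [c2 [c3 hS]]]; pose proof hS as [n12 [n13 [n23 _]]].
  destruct (local_separation (proj1_sig c1) (proj1_sig c2) (proj1_sig c3)
    (proj1_sig_neq _ _ n12) (proj1_sig_neq _ _ n13) (proj1_sig_neq _ _ n23))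
    as [V [hV [a1 [a2 [a3 [p12 [p13 p23]]]]]]].
  pose proof hV as [hVs [_ hVr]].
  set (nb := fun (c w : Ttilde tT A) => nbhd V (proj1_sig c) (proj1_sig w)).
  exists (triple_nbhd (nb c1) (nb c2) (nb c3)), V; split; [|split; [|split]].
  - apply triple_nbhd_open; apply nbhd_open; assumption.
  - exists c1, c2, c3; split; [exact hS|]; repeat split; apply nbhd_self, hVr.
  - assumption.
  - intros S' [x [y [z [[_ [_ [_ hS']]] [? [? ?]]]]]] c c' hc hc' ncc'; unfold nb in *.
    apply hS' in hc; apply hS' in hc'.
    destruct hc as [-> | [-> | ->]]; destruct hc' as [-> | [-> | ->]];
      try contradiction;
      first [ eapply (separated_nbhd A V); eassumption
            | apply separated_sym; eapply (separated_nbhd A V); eassumption ].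
Qed.

Lemma compact_pairwise_separated (K : Theta3 (Ttilde tT A) -> Prop) V0 :
  compact (theta3_top (Ttilde_top tT A)) K -> open_entourage tT V0 ->
  exists V, open_entourage tT V /\ (forall x y, V x y -> V0 x y) /\
    forall S, K S -> pairwise_separated A V S.
Proof.
  intros hK hV0; pose proof hT as [htT _].
  set (separates := fun N V => open_entourage tT V /\ forall S, N S -> pairwise_separated A V S).
  destruct (hK (fun N => theta3_top (Ttilde_top tT A) N /\ exists V, separates N V))
    as [l [hlF hlcov]].
  - intros N [? _]; assumption.
  - intros S _; destruct (separating_nbhd S) as [N [V [? [? [? ?]]]]].
    exists N; split; [split; [|exists V; split]|]; assumption.
  - destruct (finite_choice separates l) as [m [hlm hml]]; [intros N hN; apply hlF, hN|].
    exists (relI V0 (rel_bigI m)); split; [|split].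
    + apply (open_entourageI tT htT); [assumption|apply (open_entourage_bigI tT htT)].
      intros V hV; destruct (hml V hV) as [N [_ [? _]]]; assumption.
    + intros x y [? _]; assumption.
    + intros S hS; destruct (hlcov S hS) as [N [hN NS]].
      destruct (hlm N hN) as [V [hV [_ hNV]]].
      apply (pairwise_separated_sub V); [|apply hNV, NS].
      intros x y [_ hxy]; apply hxy, hV.
Qed.
End Separation.

(** * The induced action *)

Lemma gmulVr (G : group) (g : G) : gmul G g (ginv G g) = gone G.
Proof.
  rewrite <- (gmul1 G (gmul G g (ginv G g))), <- (gmulV G (ginv G g)) at 1.
  rewrite <- gmulA, (gmulA G (ginv G g) g), gmulV, gmul1; apply gmulV.
Qed.

Section Action.
Context {G : group} {T : Type} {tT : topology T} (a : action G tT).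

Lemma act_ginv_r g y : a g (a (ginv G g) y) = y.
Proof. rewrite <- actM, gmulVr; apply act1. Qed.

Lemma act_ginv_l g x : a (ginv G g) (a g x) = x.
Proof. rewrite <- actM, gmulV; apply act1. Qed.

Lemma act_inj g x y : a g x = a g y -> x = y.
Proof. intro h; rewrite <- (act_ginv_l g x), <- (act_ginv_l g y), h; reflexivity. Qed.

Lemma far_triple_moved (D : T -> T -> Prop) g x y z : (forall x, D x x) ->
  far_triple D x y z -> far_triple D (a g x) (a g y) (a g z) ->
  exists S S', far_triples D S /\ far_triples D S' /\ moves3 (fun g x y => y = a g x) g S S'.
Proof.
  intros hDr far far'.
  destruct (far_triple_neq D hDr x y z far) as [nxy [nxz nyz]].
  destruct (far_triple_neq D hDr _ _ _ far') as [mxy [mxz myz]].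
  exists (triple x y z nxy nxz nyz), (triple _ _ _ mxy mxz myz); split; [|split].
  - exists x, y, z; split; [apply is3set_tri|]; assumption.
  - exists (a g x), (a g y), (a g z); split; [apply is3set_tri|]; assumption.
  - intro w; simpl; unfold tri; split.
    + intros [-> | [-> | ->]]; eauto.
    + intros [v [[-> | [-> | ->]] ->]]; auto.
Qed.

Lemma Ent_eq (e e' : Ent tT) : (forall x y, proj1_sig e x y <-> proj1_sig e' x y) -> e = e'.
Proof.
  intro h; apply proj1_sig_inj, functional_extensionality; intro x; apply pred_ext, h.
Qed.

Variable A : Ent tT -> Prop.

Lemma Ttilde_rel_inj g (c c' w : Ttilde tT A) :
  Ttilde_rel a A g c w -> Ttilde_rel a A g c' w -> c = c'.
Proof.
  destruct c as [c hc], c' as [c' hc'], w as [w hw]; unfold Ttilde_rel; simpl.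
  intros h h'; apply proj1_sig_inj; simpl.
  destruct c as [x|e], c' as [x'|e'], w as [y|f]; try contradiction.
  - f_equal; apply (act_inj g); congruence.
  - f_equal; apply Ent_eq; intros x y.
    assert (pull : forall e0 : Ent tT, (forall u v, proj1_sig f u v <-> rel_img (a g) (proj1_sig e0) u v) ->
      proj1_sig e0 x y <-> proj1_sig f (a g x) (a g y)).
    { intros e0 he0; rewrite he0; split; [intro; exists x, y; auto|].
      intros [x0 [y0 [? [hx hy]]]]; apply act_inj in hx, hy; subst; assumption. }
    rewrite (pull e h), (pull e' h'); reflexivity.
Qed.

Hypothesis A_inv : forall (g : G) e, A e -> exists e', A e' /\
  forall x y, proj1_sig e' x y <-> rel_img (a g) (proj1_sig e) x y.

Section Contracting.
Variables (V : T -> T -> Prop) (g : G) (r b : T).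
Hypothesis contracting : forall x, ~ V r x -> V b (a g x).

Lemma image_within (c : Ttilde tT A) : ~ touches V r (proj1_sig c) ->
  exists w : Ttilde tT A, Ttilde_rel a A g c w /\ within V b (proj1_sig w).
Proof.
  destruct c as [[x|e] hc]; simpl; intro hr.
  - exists (exist (inTA tT A) (inl (a g x)) I); split; [reflexivity|apply contracting, hr].
  - destruct (A_inv g e hc) as [e' [he' hge]].
    exists (exist (inTA tT A) (inr e') he'); split; [exact hge|simpl].
    assert (hsmall : small (proj1_sig e) (V r)) by (apply NNPP; exact hr).
    intros u v hu hv; apply hge.
    exists (a (ginv G g) u), (a (ginv G g) v); rewrite !act_ginv_r; split; [|auto].
    apply hsmall; apply NNPP; intro h;
      [apply hu; rewrite <- (act_ginv_r g u)|apply hv; rewrite <- (act_ginv_r g v)];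
      apply contracting, h.
Qed.

Lemma no_separated_image S S' : pairwise_separated A V S -> pairwise_separated A V S' ->
  moves3 (Ttilde_rel a A) g S S' -> False.
Proof.
  intros hS hS' hm.
  destruct (pairwise_separated_untouched A V S r hS) as [c [c' [? [? [ncc' [? ?]]]]]].
  destruct (image_within c) as [w [hw ?]]; [assumption|].
  destruct (image_within c') as [w' [hw' ?]]; [assumption|].
  assert (Sw : proj1_sig S' w) by (apply hm; exists c; auto).
  assert (Sw' : proj1_sig S' w') by (apply hm; exists c'; auto).
  assert (nww' : w <> w') by (intros <-; apply ncc', (Ttilde_rel_inj g c c' w); assumption).
  destruct (hS' w w' Sw Sw' nww' b) as [_ hb]; auto.
Qed.
End Contracting.
End Action.

Theorem proposition3p11 (G : group) (T : Type) (tT : topology T)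
  (hT : compactum tT) (a : action G tT)
  (h3 : three_discontinuous tT (fun g x y => y = a g x))
  (A : Ent tT -> Prop)
  (hA_sl : forall e, A e -> self_linked (proj1_sig e))
  (hA_inv : forall (g : G) e, A e -> exists e', A e' /\
      forall x y, proj1_sig e' x y <-> rel_img (a g) (proj1_sig e) x y)
  (hA_fin : exists L : list (Ent tT), (forall e, In e L -> A e) /\
      forall e, A e -> exists e0 (g : G), In e0 L /\
        forall x y, proj1_sig e x y <-> rel_img (a g) (proj1_sig e0) x y) :
  three_discontinuous (Ttilde_top tT A) (Ttilde_rel a A).
Proof.
  intros K hK; pose proof hT as [htT [_ [hc [p1 [p2 [p3 [n12 [n13 n23]]]]]]]].
  destruct (open_entourage_separating3 tT htT hT p1 p2 p3 n12 n13 n23)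
    as [W [hW [nW12 [nW13 nW23]]]].
  destruct (compact_pairwise_separated hT A hA_sl K W hK hW) as [V [hV [hVW hKsep]]].
  destruct (open_entourage_quarter tT htT hT V hV) as [D [hD hDV]].
  pose proof hD as [hDs [hDo hDr]].
  destruct (h3 (far_triples D) (far_triples_compact tT htT D hDo hDr hc)) as [l hl].
  exists l; intros g [S [S' [hS [hS' hm]]]]; apply NNPP; intro notin.
  destruct (contraction T D V (a g) hDs hDr hDV) with p1 p2 p3 as [r [b contracting]].
  - intros x y z far far'; apply notin, hl, (far_triple_moved a D g x y z hDr far far').
  - intro y; exists (a (ginv G g) y); apply act_ginv_r.
  - intro h; apply nW12, hVW, h.
  - intro h; apply nW13, hVW, h.
  - intro h; apply nW23, hVW, h.
  - exact (no_separated_image a A hA_inv V g r b contracting S S' (hKsep S hS) (hKsep S' hS') hm).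
Qed.
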